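(* Let $\mathcal F,\mathcal G$ be weighted species with coefficients $f_n=[z^n]\mathcal F(z)$ and $g_n=[z^n]\mathcal G(z)$, both positive for all sufficiently large $n$. Suppose $\mathcal G$ has radius of convergence $\rho_{\mathcal G}\in(0,\infty)$, that $g_n/g_{n+1}\to\rho_{\mathcal G}$ and $\frac1{g_n}\sum_{i+j=n}g_ig_j\to2\mathcal G(\rho_{\mathcal G})<\infty$, and that $f_n=o(g_n)$. Let $\mathsf S_n$ be an $n$-sized $\mathcal F\mathcal G$-structure (on label set $\{1,\dots,n\}$) drawn with probability proportional to its weight. Then $$[z^n]\mathcal F(z)\mathcal G(z)\sim\mathcal F(\rho_{\mathcal G})\,g_n,$$ and the $\mathcal F$-component of $\mathsf S_n$, relabelled order-preservingly onto $\{1,\dots,|\cdot|\}$, converges in distribution to a Boltzmann distributed $\mathcal F$-object with parameter $\rho_{\mathcal G}$.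
   Context: A weighted species $\mathcal F$ assigns to each finite set $U$ a finite set $\mathcal F[U]$ of structures, each with a nonnegative weight, compatibly with relabelling along bijections; $[z^n]\mathcal F(z)$ is $1/n!$ times the total weight of $\mathcal F[\{1,\dots,n\}]$ and $\mathcal F(z)$ is the exponential generating series. An $\mathcal F\mathcal G$-structure on $U$ is a pair consisting of an $\mathcal F$-structure on $U_1$ and a $\mathcal G$-structure on $U_2$ with $U=U_1\sqcup U_2$, weight the product; its components are the two parts. For $\rho>0$ with $\mathcal F(\rho)<\infty$, the Boltzmann distribution with parameter $\rho$ selects $F\in\mathcal F[\{1,\dots,m\}]$, $m\ge0$, with probability $\omega(F)\rho^m/(m!\,\mathcal F(\rho))$, $\omega(F)$ the weight. *)

From mathcomp Require Import all_boot.
From Stdlib Require Import Reals.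
Set Implicit Arguments.
Unset Strict Implicit.
Unset Printing Implicit Defensive.

Open Scope R_scope.

(* A weighted species F is represented by its structures on the canonical
   label sets [n] = 'I_n : a finite type [Fs n] of F-structures on 'I_n and a
   weight function [w n : Fs n -> R] (nonnegativity is a hypothesis of the
   theorem).  Structures on an arbitrary finite set U are transported to
   'I_|U| by the order-preserving bijection. *)

Definition rsum (T : finType) (f : T -> R) : R := \big[Rplus/0]_(x : T) f x.

Definition egf_coef (Fs : nat -> finType) (w : forall n, Fs n -> R) (n : nat) : R :=
  rsum (w n) / INR (Factorial.fact n).

Definition cauchy_coef (a b : nat -> R) (n : nat) : R :=
  sum_f_R0 (fun k => a k * b (n - k)%nat) n.

Definition series_value (a : nat -> R) (x v : R) : Prop :=
  infinite_sum (fun n => a n * x ^ n) v.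

Definition radius_of_convergence (a : nat -> R) (r : R) : Prop :=
  (forall x, Rabs x < r -> exists v, series_value a x v) /\
  (forall x, r < Rabs x -> ~ (exists v, series_value a x v)).

(* Expectation of a test function h of the (order-preservingly relabelled)
   F-component of a random FG-structure S_n on 'I_n drawn with probability
   proportional to its weight.  An FG-structure on 'I_n is a triple
   (U, x, y) with U the label set of the F-part, x an F-structure on U
   (represented on 'I_#|U|), y a G-structure on the complement ~: U
   (represented on 'I_#|~:U|); its weight is wF x * wG y. *)
Definition FG_total_weight (Fs Gs : nat -> finType)
  (wF : forall n, Fs n -> R) (wG : forall n, Gs n -> R) (n : nat) : R :=
  rsum (fun U : {set 'I_n} =>
    rsum (fun x : Fs #|U| => rsum (fun y : Gs #|~: U| => wF _ x * wG _ y))).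

Definition Fcomponent_expectation (Fs Gs : nat -> finType)
  (wF : forall n, Fs n -> R) (wG : forall n, Gs n -> R)
  (h : forall m, Fs m -> R) (n : nat) : R :=
  rsum (fun U : {set 'I_n} =>
    rsum (fun x : Fs #|U| => rsum (fun y : Gs #|~: U| =>
      wF _ x * wG _ y * h _ x)))
  / FG_total_weight wF wG n.

(* Expectation of h under the Boltzmann distribution with parameter rho,
   where Fval = F(rho): F in F[{1..m}] has probability
   w(F) rho^m / (m! F(rho)).  [v] is the value of the (convergent) series. *)
Definition boltzmann_expectation (Fs : nat -> finType) (w : forall n, Fs n -> R)
  (rho Fval : R) (h : forall m, Fs m -> R) (v : R) : Prop :=
  infinite_sum
    (fun m => rsum (fun x : Fs m => h m x * (w m x * rho ^ m / (INR (Factorial.fact m) * Fval))))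
    v.

(* Convergence in distribution (on the discrete countable space of all
   F-structures on some [m]) of the F-component of S_n to the Boltzmann
   distribution: E h(X_n) -> E h(X) for every bounded test function h. *)
Definition Fcomponent_converges_to_boltzmann (Fs Gs : nat -> finType)
  (wF : forall n, Fs n -> R) (wG : forall n, Gs n -> R) (rho Fval : R) : Prop :=
  forall h : forall m, Fs m -> R,
    (exists M, forall m (x : Fs m), Rabs (h m x) <= M) ->
    exists v, boltzmann_expectation wF rho Fval h v /\
      Un_cv (Fcomponent_expectation wF wG h) v.

(* The analytic core is the
   classical lemma on subexponential sequences (cauchy_little_o): if
   g_n/g_{n+1} -> rho, (g*g)_n/g_n converges, a = o(g) and sum a_n rho^n = A,
   then (a*g)_n ~ A g_n.  It is proved by splitting the Cauchy product at a
   fixed index K: the first K terms are handled by g_{n-k}/g_n -> rho^k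
   (ratio_pow), the remaining ones are at most a small multiple of (g*g)_n.
   The combinatorial core (FG_weighted_sum) is the product formula for
   exponential generating series, weighted by a test function h of the
   F-component.  Applying cauchy_little_o to a = f gives [z^n] FG ~ F(rho) g_n;
   applying it to the h-weighted coefficients of F (still o(g) for bounded h)
   identifies the limit of E h(F-component of S_n) as the Boltzmann
   expectation of h. *)

From Stdlib Require Import Reals Lra.
From Coquelicot Require Import Coquelicot.
From mathcomp Require Import all_boot zify all_order all_algebra Rstruct.
From mathcomp Require ring.
Import Order.TTheory GRing.Theory Num.Theory.
Open Scope R_scope.

Lemma Un_cv_eventually_ext (u v : nat -> R) l :
  (exists N, forall n, (N <= n)%coq_nat -> u n = v n) -> Un_cv u l -> Un_cv v l.
Proof.
move=> [N HN] Hu eps Heps; have [M HM] := Hu eps Heps.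
exists (Nat.max N M) => n Hn; rewrite -HN; last lia.
apply: HM; lia.
Qed.

Lemma Un_cv_delay (u : nat -> R) l j : Un_cv u l -> Un_cv (fun n => u (n - j)%nat) l.
Proof.
move=> Hu eps Heps; have [M HM] := Hu eps Heps.
exists (M + j)%nat => n Hn; apply: HM; lia.
Qed.

Lemma Un_cv_const (c : R) : Un_cv (fun _ => c) c.
Proof. move=> eps Heps; exists 0%nat => n _; rewrite /R_dist Rminus_diag Rabs_R0; lra. Qed.

Lemma Un_cv_sum_f_R0 (u : nat -> nat -> R) (l : nat -> R) K :
  (forall k, Un_cv (u k) (l k)) ->
  Un_cv (fun n => sum_f_R0 (fun k => u k n) K) (sum_f_R0 l K).
Proof.
move=> H; elim: K => [|K IH] /=; first exact: H.
exact: CV_plus IH (H K.+1).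
Qed.

Lemma Un_cv_dominated_zero (u v : nat -> R) M :
  (exists N, forall n, (N <= n)%coq_nat -> Rabs (u n) <= M * Rabs (v n)) ->
  Un_cv v 0 -> Un_cv u 0.
Proof.
move=> [N HN] Hv eps Heps.
have HM1 : 0 < Rabs M + 1 by move: (Rabs_pos M); lra.
have [K HK] := Hv (eps / (Rabs M + 1)) (Rdiv_lt_0_compat _ _ Heps HM1).
exists (Nat.max N K) => n Hn.
have := HK n ltac:(lia); have := HN n ltac:(lia).
rewrite /R_dist !Rminus_0_r => Hu Hvn.
have HMv : M * Rabs (v n) <= (Rabs M + 1) * Rabs (v n).
  by apply: Rmult_le_compat_r; [exact: Rabs_pos | move: (RRle_abs M); lra].
have Hlt : (Rabs M + 1) * Rabs (v n) < (Rabs M + 1) * (eps / (Rabs M + 1)).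
  exact: Rmult_lt_compat_l.
have -> : eps = (Rabs M + 1) * (eps / (Rabs M + 1)) by field; lra.
lra.
Qed.

Lemma Un_cv_inv (u : nat -> R) (l : R) :
  l <> 0 -> Un_cv u l -> Un_cv (fun n => / u n) (/ l).
Proof.
move=> Hl Hu; apply/is_lim_seq_Reals.
apply: (is_lim_seq_inv _ (Rbar.Finite l)); first exact/is_lim_seq_Reals.
by move=> [].
Qed.

Lemma little_o_bound (a g : nat -> R) (Ng : nat) d :
  (forall n, (Ng <= n)%coq_nat -> 0 < g n) -> Un_cv (fun n => a n / g n) 0 -> 0 < d ->
  exists K, forall m, (K <= m)%coq_nat -> 0 < g m /\ Rabs (a m) <= d * g m.
Proof.
move=> g_pos Hag Hd; have [K HK] := Hag d Hd.
exists (K + Ng)%nat => m Hm.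
have Hgm : 0 < g m by apply: g_pos; lia.
split=> //; have := HK m ltac:(lia); rewrite /R_dist Rminus_0_r => Ham.
have -> : a m = (a m / g m) * g m by field; lra.
rewrite Rabs_mult (Rabs_right (g m)); last lra.
apply: Rmult_le_compat_r; lra.
Qed.

Lemma series_value_little_o (a g : nat -> R) (rho G : R) (Ng : nat) :
  (forall n, (Ng <= n)%coq_nat -> 0 < g n) -> 0 < rho ->
  Un_cv (fun n => a n / g n) 0 -> series_value g rho G ->
  exists A, series_value a rho A.
Proof.
move=> g_pos rho_pos Hag HG.
have [M HM] := little_o_bound a g Ng 1 g_pos Hag Rlt_0_1.
have Hexg : ex_series (fun n => g n * rho ^ n) by exists G; apply/is_series_Reals.
suff [A HA] : ex_series (fun n => a n * rho ^ n) by exists A; apply/is_series_Reals.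
apply: ex_series_Rabs; apply/(ex_series_incr_n _ M).
apply: (ex_series_le _ (fun k => g (M + k)%coq_nat * rho ^ (M + k)%coq_nat)); last first.
  exact: (proj1 (ex_series_incr_n (fun n => g n * rho ^ n) M) Hexg).
move=> k; rewrite /norm /= /abs /= Rabs_Rabsolu Rabs_mult.
have Hpow : 0 <= rho ^ (M + k)%coq_nat by apply: pow_le; lra.
rewrite (Rabs_right (rho ^ _)); last lra.
apply: Rmult_le_compat_r => //.
have [_ Hak] := HM (M + k)%coq_nat ltac:(lia); lra.
Qed.

Lemma series_value_pos (f : nat -> R) (rho F : R) (N : nat) :
  (forall n, 0 <= f n) -> 0 < f N -> 0 < rho -> series_value f rho F -> 0 < F.
Proof.
move=> f0 fN rho_pos HF.
have term_ge0 n : 0 <= f n * rho ^ n by apply: Rmult_le_pos => //; apply: pow_le; lra.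
have Hgrow : Un_growing (sum_f_R0 (fun n => f n * rho ^ n)).
  by move=> n; rewrite tech5; have := term_ge0 n.+1; lra.
have HN : 0 < f N * rho ^ N by apply: Rmult_lt_0_compat => //; apply: pow_lt.
have := growing_ineq _ _ Hgrow HF N.
case: N fN HN => [|m] _ /= HN; first lra.
have := cond_pos_sum _ m term_ge0; lra.
Qed.

Definition cauchy_head (a b : nat -> R) (K n : nat) : R :=
  sum_f_R0 (fun k => a k * b (n - k)%nat) K.

Definition cauchy_tail (a b : nat -> R) (K n : nat) : R :=
  sum_f_R0 (fun i => a (K.+1 + i)%nat * b (n - (K.+1 + i))%nat) (n - K.+1).

Lemma cauchy_coef_split (a b : nat -> R) (K n : nat) :
  (K < n)%coq_nat -> cauchy_coef a b n = cauchy_head a b K n + cauchy_tail a b K n.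
Proof. by move=> HKn; rewrite /cauchy_coef (tech2 _ K n). Qed.

Lemma cauchy_tail_bound (a g : nat -> R) (d : R) (K n : nat) :
  (forall n, 0 <= g n) -> 0 <= d -> (K < n)%coq_nat ->
  (forall m, (K < m)%coq_nat -> Rabs (a m) <= d * g m) ->
  Rabs (cauchy_tail a g K n) <= d * cauchy_coef g g n.
Proof.
move=> g0 Hd HKn Ha.
have Hhead : 0 <= d * cauchy_head g g K n.
  by apply: Rmult_le_pos => //; apply: cond_pos_sum => k; apply: Rmult_le_pos.
rewrite (cauchy_coef_split g g K n HKn) Rmult_plus_distr_l.
suff : Rabs (cauchy_tail a g K n) <= d * cauchy_tail g g K n by lra.
apply: Rle_trans (sum_f_R0_triangle _ _) _.
rewrite /cauchy_tail scal_sum; apply: sum_Rle => i _.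
rewrite Rabs_mult (Rabs_right (g _)); last exact: Rle_ge.
have := Rmult_le_compat_r _ _ _ (g0 (n - (K.+1 + i))%nat) (Ha (K.+1 + i)%nat ltac:(lia)).
lra.
Qed.

Section Subexponential.
Variables (g : nat -> R) (rho L : R) (Ng : nat).
Hypothesis g_nonneg : forall n, 0 <= g n.
Hypothesis g_pos : forall n, (Ng <= n)%coq_nat -> 0 < g n.
Hypothesis ratio : Un_cv (fun n => g n / g (S n)) rho.
Hypothesis conv : Un_cv (fun n => cauchy_coef g g n / g n) L.

Lemma ratio_pow k : Un_cv (fun n => g (n - k)%nat / g n) (rho ^ k).
Proof.
elim: k => [|k IH].
  apply: (Un_cv_eventually_ext (fun _ => 1)); last exact: Un_cv_const.
  exists Ng => n Hn; rewrite subn0 /Rdiv Rinv_r //.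
  by apply: Rgt_not_eq; apply: g_pos.
have H := CV_mult _ _ _ _ (Un_cv_delay _ _ k.+1 ratio) IH.
apply: Un_cv_eventually_ext H; exists (Ng + k.+1)%nat => n Hn.
have -> : (S (n - k.+1) = n - k)%nat by lia.
have Hnk : 0 < g (n - k)%nat by apply: g_pos; lia.
have Hnk1 : 0 < g (n - k.+1)%nat by apply: g_pos; lia.
have Hn0 : 0 < g n by apply: g_pos; lia.
rewrite /Rdiv; field; lra.
Qed.

Lemma cauchy_head_cv (a : nat -> R) K :
  Un_cv (fun n => cauchy_head a g K n / g n) (sum_f_R0 (fun k => a k * rho ^ k) K).
Proof.
have Hs := Un_cv_sum_f_R0 _ _ K
  (fun k => CV_mult _ _ _ _ (Un_cv_const (a k)) (ratio_pow k)).
apply: Un_cv_eventually_ext Hs; exists 0%nat => n _.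
rewrite /cauchy_head /Rdiv (Rmult_comm (sum_f_R0 _ K)) scal_sum.
by apply: PartSum.sum_eq => k _; ring.
Qed.

(* The first K terms give A up to a small error, and the
   remaining ones are bounded by a small multiple of (g*g)_n = O(g_n). *)
Lemma cauchy_little_o (a : nat -> R) (A : R) :
  Un_cv (fun n => a n / g n) 0 -> series_value a rho A ->
  Un_cv (fun n => cauchy_coef a g n / g n) A.
Proof.
move=> Hag HA eps Heps.
pose C := Rabs L + 1; have HC : 0 < C by rewrite /C; move: (Rabs_pos L); lra.
pose d := eps / (3 * C).
have Hd : 0 < d by apply: Rdiv_lt_0_compat; lra.
have HdC : d * C = eps / 3 by rewrite /d; field; lra.
have [N1 HN1] := conv 1 Rlt_0_1.
have [K0 HK0] := little_o_bound a g Ng d g_pos Hag Hd.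
have [K1 HK1] := HA (eps / 3) ltac:(lra).
pose K := (K0 + K1)%nat.
have [N2 HN2] := cauchy_head_cv a K (eps / 3) ltac:(lra).
exists (N1 + N2 + K.+1 + Ng)%nat => n Hn.
have Hgn : 0 < g n by apply: g_pos; lia.
have Hgg : cauchy_coef g g n / g n <= C.
  have := HN1 n ltac:(lia); rewrite /R_dist /C => H.
  move: (Rle_abs (cauchy_coef g g n / g n - L)) (RRle_abs L); lra.
have Htail : Rabs (cauchy_tail a g K n / g n) <= eps / 3.
  have Hb := cauchy_tail_bound a g d K n g_nonneg (Rlt_le _ _ Hd) ltac:(lia)
    (fun m Hm => proj2 (HK0 m ltac:(lia))).
  rewrite Rabs_div; last lra.
  rewrite (Rabs_right (g n)); last lra.
  apply/Rle_div_l; first lra.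
  apply: Rle_trans Hb _; rewrite -HdC Rmult_assoc; apply: Rmult_le_compat_l; first lra.
  by apply/Rle_div_l.
have := HN2 n ltac:(lia); have := HK1 K ltac:(lia); rewrite /R_dist => H1 H2.
rewrite /R_dist (cauchy_coef_split a g K n); last lia.
have -> : (cauchy_head a g K n + cauchy_tail a g K n) / g n - A =
  (cauchy_head a g K n / g n - sum_f_R0 (fun k => a k * rho ^ k) K)
  + (sum_f_R0 (fun k => a k * rho ^ k) K - A) + cauchy_tail a g K n / g n by field; lra.
apply: Rle_lt_trans (Rabs_triang _ _) _.
apply: Rle_lt_trans (Rplus_le_compat_r _ _ _ (Rabs_triang _ _)) _.
lra.
Qed.

End Subexponential.

(* Weighted n-th coefficient: 1/n! times the h-weighted total weight of
   F[{1..n}].  For h = 1 it is egf_coef, and sum_n weighted_coef h n rho^n is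
   F(rho) times the Boltzmann expectation of h. *)
Definition weighted_coef {Fs : nat -> finType} (w : forall n, Fs n -> R)
  (h : forall m, Fs m -> R) (n : nat) : R :=
  rsum (fun x : Fs n => w n x * h n x) / INR (Factorial.fact n).

Section Counting.
Import ring.
Local Open Scope ring_scope.

Lemma sum_subsets_by_card (V : nmodType) (n : nat) (phi : nat -> V) :
  \sum_(U : {set 'I_n}) phi #|U| = \sum_(k < n.+1) phi k *+ 'C(n, k).
Proof.
rewrite (partition_big (fun U : {set 'I_n} => (inord #|U| : 'I_n.+1)) xpredT) //=.
apply: eq_bigr => k _.
have cardU (U : {set 'I_n}) : (#|U| < n.+1)%N.
  by rewrite ltnS; have := max_card (mem U); rewrite card_ord.
transitivity (\sum_(U in [set U : {set 'I_n} | #|U| == k]) phi k).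
  apply: eq_big => U.
    rewrite inE; apply/eqP/eqP => [<-|H]; first by rewrite inordK.
    by apply: val_inj; rewrite /= -H inordK.
  by move=> /eqP <-; rewrite inordK.
by rewrite sumr_const card_draws card_ord.
Qed.

Lemma sum_f_R0_big (f : nat -> R) (n : nat) : sum_f_R0 f n = \sum_(k < n.+1) f k.
Proof.
elim: n => [|n IH] /=; first by rewrite big_ord_recr big_ord0 /= add0r.
by rewrite IH [in RHS]big_ord_recr /= RplusE.
Qed.

Lemma INR_fact_neq0 (k : nat) : (INR (Factorial.fact k) : R) != 0.
Proof. by rewrite INRE factE pnatr_eq0 -lt0n fact_gt0. Qed.

(* Group the structures by
   the size k of the F-part and use C(n,k) k! (n-k)! = n!. *)
Lemma FG_weighted_sum (Fs Gs : nat -> finType)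
  (wF : forall n, Fs n -> R) (wG : forall n, Gs n -> R)
  (h : forall m, Fs m -> R) (n : nat) :
  rsum (fun U : {set 'I_n} =>
    rsum (fun x : Fs #|U| => rsum (fun y : Gs #|~: U| => wF _ x * wG _ y * h _ x)))
  = Rmult (INR (Factorial.fact n)) (cauchy_coef (weighted_coef wF h) (egf_coef wG) n).
Proof.
pose P p q := (\sum_(x : Fs p) wF _ x * h _ x) * (\sum_(y : Gs q) wG _ y).
transitivity (\sum_(U : {set 'I_n}) P #|U| (n - #|U|)%N).
  apply: eq_bigr => U _.
  have -> : (n - #|U| = #|~: U|)%N by have := cardsC U; rewrite card_ord => {1}<-; rewrite addKn.
  rewrite /P mulr_suml; apply: eq_bigr => x _; rewrite mulr_sumr; apply: eq_bigr => y _.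
  by rewrite mulrAC.
rewrite (sum_subsets_by_card _ n (fun k => P k (n - k)%N)).
rewrite /cauchy_coef sum_f_R0_big RmultE mulr_sumr; apply: eq_bigr => k _.
have kn : (k <= n)%N by rewrite -ltnS.
rewrite /P /weighted_coef /egf_coef /rsum !RdivE !RmultE !INRE !factE.
have H1 := INR_fact_neq0 k; have H2 := INR_fact_neq0 (n - k); rewrite !INRE !factE in H1 H2.
rewrite -(bin_fact kn) !natrM -mulr_natr.
by field; rewrite H1 H2.
Qed.

Lemma weighted_coef_one (Fs : nat -> finType) (w : forall n, Fs n -> R) :
  weighted_coef w (fun _ _ => 1) =1 egf_coef w.
Proof.
move=> n; rewrite /weighted_coef /egf_coef; congr (_ / _).
by apply: eq_bigr => x _; rewrite RmultE mulr1.
Qed.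

Lemma FG_total_weight_cauchy (Fs Gs : nat -> finType)
  (wF : forall n, Fs n -> R) (wG : forall n, Gs n -> R) (n : nat) :
  FG_total_weight wF wG n
  = Rmult (INR (Factorial.fact n)) (cauchy_coef (egf_coef wF) (egf_coef wG) n).
Proof.
have -> : cauchy_coef (egf_coef wF) (egf_coef wG) n
          = cauchy_coef (weighted_coef wF (fun _ _ => 1)) (egf_coef wG) n.
  by rewrite /cauchy_coef !sum_f_R0_big; apply: eq_bigr => k _; rewrite weighted_coef_one.
rewrite -FG_weighted_sum.
by apply: eq_bigr => U _; apply: eq_bigr => x _; apply: eq_bigr => y _; rewrite RmultE mulr1.
Qed.

Lemma rsum_weighted_abs_le (T : finType) (w h : T -> R) (M : R) :
  (forall x, 0 <= w x) -> (forall x, `|h x| <= M) ->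
  `|rsum (fun x => w x * h x)| <= M * rsum w.
Proof.
move=> w0 hM; apply: le_trans (ler_norm_sum _ _ _) _.
rewrite /rsum mulr_sumr; apply: ler_sum => x _.
by rewrite normrM ger0_norm // mulrC ler_wpM2r.
Qed.

End Counting.

Lemma rsum_ge0 (T : finType) (w : T -> R) : (forall x, 0 <= w x) -> 0 <= rsum w.
Proof. by move=> w0; apply/RleP/sumr_ge0 => x _; apply/RleP. Qed.

Lemma egf_coef_ge0 (Fs : nat -> finType) (w : forall n, Fs n -> R) (n : nat) :
  (forall x, 0 <= w n x) -> 0 <= egf_coef w n.
Proof.
move=> w0; apply: Rmult_le_pos; first exact: rsum_ge0.
exact/Rlt_le/Rinv_0_lt_compat/INR_fact_lt_0.
Qed.

Lemma weighted_coef_abs_le (Fs : nat -> finType) (w : forall n, Fs n -> R)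
  (h : forall m, Fs m -> R) (M : R) (n : nat) :
  (forall x, 0 <= w n x) -> (forall x, Rabs (h n x) <= M) ->
  Rabs (weighted_coef w h n) <= M * egf_coef w n.
Proof.
move=> w0 hM.
have Hfact : 0 < / INR (Factorial.fact n) by apply/Rinv_0_lt_compat/INR_fact_lt_0.
rewrite /weighted_coef /egf_coef Rabs_mult (Rabs_right (/ _)); last lra.
rewrite /Rdiv -Rmult_assoc; apply: Rmult_le_compat_r; first lra.
apply/RleP; rewrite RabsE RmultE.
by apply: rsum_weighted_abs_le => x; apply/RleP; [exact: w0 | rewrite -RabsE; exact: hM].
Qed.

Lemma weighted_coef_little_o (Fs : nat -> finType) (w : forall n, Fs n -> R)
  (h : forall m, Fs m -> R) (M : R) (g : nat -> R) (Ng : nat) :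
  (forall n (x : Fs n), 0 <= w n x) -> (forall n (x : Fs n), Rabs (h n x) <= M) ->
  (forall n, (Ng <= n)%coq_nat -> 0 < g n) ->
  Un_cv (fun n => egf_coef w n / g n) 0 -> Un_cv (fun n => weighted_coef w h n / g n) 0.
Proof.
move=> w0 hM g_pos; apply: (Un_cv_dominated_zero _ _ M); exists Ng => n Hn.
have Hg := g_pos n Hn.
have Hf : 0 <= egf_coef w n by apply/egf_coef_ge0/w0.
rewrite (Rabs_div (weighted_coef w h n)) ?(Rabs_div (egf_coef w n)); try lra.
rewrite (Rabs_right (g n)) ?(Rabs_right (egf_coef w n)); try lra.
rewrite /Rdiv -Rmult_assoc; apply: Rmult_le_compat_r.
  exact/Rlt_le/Rinv_0_lt_compat.
exact: weighted_coef_abs_le.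
Qed.

Lemma rsum_mulr_div (T : finType) (w h : T -> R) (c e : R) :
  rsum (fun x => h x * (w x * c / e)) = rsum (fun x => w x * h x) * c / e.
Proof.
rewrite /rsum /Rdiv !RmultE !mulr_suml; apply: eq_bigr => x _.
rewrite -!RmultE; ring.
Qed.

Lemma boltzmann_expectation_series (Fs : nat -> finType) (w : forall n, Fs n -> R)
  (h : forall m, Fs m -> R) (rho Fval A : R) :
  series_value (weighted_coef w h) rho A -> boltzmann_expectation w rho Fval h (A / Fval).
Proof.
move=> HA; have := CV_mult _ _ _ _ HA (Un_cv_const (/ Fval)).
apply: Un_cv_eventually_ext; exists 0%nat => n _.
rewrite Rmult_comm scal_sum; apply: PartSum.sum_eq => m _.
rewrite rsum_mulr_div /weighted_coef /Rdiv Rinv_mult; ring.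
Qed.

Lemma Fcomponent_expectation_ratio (Fs Gs : nat -> finType)
  (wF : forall n, Fs n -> R) (wG : forall n, Gs n -> R) (h : forall m, Fs m -> R) (n : nat) :
  egf_coef wG n <> 0 ->
  Fcomponent_expectation wF wG h n =
  (cauchy_coef (weighted_coef wF h) (egf_coef wG) n / egf_coef wG n)
  * / (cauchy_coef (egf_coef wF) (egf_coef wG) n / egf_coef wG n).
Proof.
move=> Hg; rewrite /Fcomponent_expectation FG_weighted_sum FG_total_weight_cauchy.
have Hfact : INR (Factorial.fact n) <> 0 by apply/Rgt_not_eq/INR_fact_lt_0.
case: (Req_dec (cauchy_coef (egf_coef wF) (egf_coef wG) n) 0) => [->|Hc].
  by rewrite /Rdiv Rmult_0_r !Rmult_0_l Rinv_0 !Rmult_0_r.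
by field; split.
Qed.

Theorem proposition5
  (Fs Gs : nat -> finType)
  (wF : forall n, Fs n -> R) (wG : forall n, Gs n -> R)
  (wF_nonneg : forall n (x : Fs n), 0 <= wF n x)
  (wG_nonneg : forall n (y : Gs n), 0 <= wG n y)
  (eventually_pos : exists N, forall n, (N <= n)%nat ->
      0 < egf_coef wF n /\ 0 < egf_coef wG n)
  (rhoG : R) (rhoG_pos : 0 < rhoG)
  (rhoG_radius : radius_of_convergence (egf_coef wG) rhoG)
  (ratio_lim : Un_cv (fun n => egf_coef wG n / egf_coef wG (S n)) rhoG)
  (Grho : R) (Grho_val : series_value (egf_coef wG) rhoG Grho)
  (conv_lim : Un_cv (fun n => cauchy_coef (egf_coef wG) (egf_coef wG) n / egf_coef wG n)
                    (2 * Grho))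
  (f_little_o_g : Un_cv (fun n => egf_coef wF n / egf_coef wG n) 0) :
  exists Frho : R,
    series_value (egf_coef wF) rhoG Frho /\
    Un_cv (fun n => cauchy_coef (egf_coef wF) (egf_coef wG) n / (Frho * egf_coef wG n)) 1 /\
    Fcomponent_converges_to_boltzmann wF wG rhoG Frho.
Proof.
have [N HN] := eventually_pos.
have g0 n : 0 <= egf_coef wG n by apply/egf_coef_ge0/wG_nonneg.
have g_pos n : (N <= n)%coq_nat -> 0 < egf_coef wG n by move=> Hn; case: (HN n ltac:(lia)).
have [F HF] := series_value_little_o _ _ _ _ N g_pos rhoG_pos f_little_o_g Grho_val.
have F_pos : 0 < F.
  apply: (series_value_pos (egf_coef wF) rhoG F N) => //; last by case: (HN N (leqnn N)).
  by move=> n; apply/egf_coef_ge0/wF_nonneg.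
have sub_lim := cauchy_little_o _ _ _ N g0 g_pos ratio_lim conv_lim.
have HfF := sub_lim _ _ f_little_o_g HF.
exists F; split; [exact: HF | split].
  have := CV_mult _ _ _ _ HfF (Un_cv_const (/ F)); rewrite Rinv_r; last lra.
  apply: Un_cv_eventually_ext; exists 0%nat => n _.
  by rewrite /Rdiv Rinv_mult; ring.
move=> h [M HM].
have Hag := weighted_coef_little_o _ _ h M _ N wF_nonneg HM g_pos f_little_o_g.
have [A HA] := series_value_little_o _ _ _ _ N g_pos rhoG_pos Hag Grho_val.
exists (A / F); split; first exact: boltzmann_expectation_series.
have := CV_mult _ _ _ _ (sub_lim _ _ Hag HA) (Un_cv_inv _ _ (Rgt_not_eq _ _ F_pos) HfF).
apply: Un_cv_eventually_ext; exists N => n Hn.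
by rewrite Fcomponent_expectation_ratio; last exact/Rgt_not_eq/g_pos.
Qed.
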